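(* For every $i\geq0$ we have $$\frac{\sqrt\Delta}{c_{i+1}}\left(1-\frac1{c_ic_{i+1}}\right)<N_i<\frac{\sqrt\Delta}{c_{i+1}},$$ and in particular $\frac{N_i}{\sqrt\Delta}<\frac1{u_{i+1}}$, and $\frac1{u_{i+1}+10}<\frac{N_i}{\sqrt\Delta}$ whenever $u_{i+1}\geq3$.
   Context: $D>1$ squarefree, $K=\mathbb{Q}(\sqrt D)$, $\Delta$ its discriminant, $\alpha'$ the conjugate of $\alpha$ and $N(\alpha)=\alpha\alpha'$. $\omega_D=\sqrt D$ if $D\equiv2,3\pmod4$, $\omega_D=\frac{1+\sqrt D}2$ if $D\equiv1\pmod4$, with continued fraction $\omega_D=[u_0;u_1,u_2,\dots]$. Let $p_{-1}=1,q_{-1}=0,p_0=u_0,q_0=1$, $p_{i+1}=u_{i+1}p_i+p_{i-1}$, $q_{i+1}=u_{i+1}q_i+q_{i-1}$, $\alpha_i=p_i-q_i\omega_D'$, $N_i=|N(\alpha_i)|$, and $c_i=[u_i;u_{i+1},u_{i+2},\dots]$ the complete quotients (so $c_0=\omega_D$). *)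

From Stdlib Require Import Reals ZArith Lra Lia.
Open Scope R_scope.

Definition squarefree (D : Z) : Prop :=
  forall k : Z, (1 < k)%Z -> ~ (k * k | D)%Z.

(* For squarefree D > 1, D mod 4 is 1, 2 or 3. *)
Definition omega (D : Z) : R :=
  if Z.eqb (Z.modulo D 4) 1 then (1 + sqrt (IZR D)) / 2 else sqrt (IZR D).

Definition omega' (D : Z) : R :=
  if Z.eqb (Z.modulo D 4) 1 then (1 - sqrt (IZR D)) / 2 else - sqrt (IZR D).

Definition discK (D : Z) : Z :=
  if Z.eqb (Z.modulo D 4) 1 then D else (4 * D)%Z.

Fixpoint cq (D : Z) (i : nat) : R :=
  match i with
  | O => omega D
  | S k => / (cq D k - IZR (Int_part (cq D k)))
  end.

Definition pq (D : Z) (i : nat) : Z := Int_part (cq D i).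

(* (p_{i-1}, p_i) with p_{-1} = 1, p_0 = u_0 *)
Fixpoint pp (D : Z) (i : nat) : Z * Z :=
  match i with
  | O => (1%Z, pq D 0)
  | S k => let (a, b) := pp D k in (b, (pq D (S k) * b + a)%Z)
  end.

(* (q_{i-1}, q_i) with q_{-1} = 0, q_0 = 1 *)
Fixpoint qq (D : Z) (i : nat) : Z * Z :=
  match i with
  | O => (0%Z, 1%Z)
  | S k => let (a, b) := qq D k in (b, (pq D (S k) * b + a)%Z)
  end.

Definition p_ (D : Z) (i : nat) : Z := snd (pp D i).
Definition q_ (D : Z) (i : nat) : Z := snd (qq D i).

Definition alpha (D : Z) (i : nat) : R := IZR (p_ D i) - IZR (q_ D i) * omega' D.
Definition alpha_conj (D : Z) (i : nat) : R := IZR (p_ D i) - IZR (q_ D i) * omega D.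

Definition Nrm (D : Z) (i : nat) : R := Rabs (alpha D i * alpha_conj D i).

From Stdlib Require Import Reals ZArith Lra Lia Psatz.
Open Scope R_scope.

(* Put [Q_i = q_i c_{i+1} + q_{i-1}].  Since [omega_D = (p_i c_{i+1} + p_{i-1}) / Q_i],
   the conjugate [alpha_i' = p_i - q_i omega_D] equals [e_i / Q_i] with
   [e_i = p_i q_{i-1} - q_i p_{i-1} = (-1)^(i+1)], while [alpha_i - alpha_i' = q_i sqrt Delta];
   hence [N_i Q_i^2 = q_i sqrt Delta Q_i + e_i] exactly.  Against this value both bounds
   reduce to inequalities in which only the sign [e_i] is delicate, and they hold because
   [q_{i-1} >= 1] for [i >= 1], [q_{i-2} >= 1] for [i >= 2], [e_1 = 1] and [omega_D < sqrt Delta].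
   The bounds on [N_i / sqrt Delta] follow from [u_{i+1} < c_{i+1} < u_{i+1} + 1].
   Irrationality of [omega_D] keeps every [c_i] finite and [> 1]. *)

Definition irrational (x : R) : Prop :=
  forall p q : Z, q <> 0%Z -> x * IZR q <> IZR p.

Lemma square_of_square_ratio (D p q : Z) :
  q <> 0%Z -> (D * (q * q) = p * p)%Z -> exists k, D = (k * k)%Z.
Proof.
  intros Hq E.
  set (g := Z.gcd p q).
  assert (Hg : (0 < g)%Z).
  { assert (g <> 0%Z) by (intro H; apply Hq; exact (Z.gcd_eq_0_r _ _ H)).
    pose proof (Z.gcd_nonneg p q); lia. }
  destruct (Z.gcd_divide_l p q) as [p' Hp], (Z.gcd_divide_r p q) as [q' Hq'].
  fold g in Hp, Hq'.
  assert (Hcop : Z.gcd p' q' = 1%Z).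
  { pose proof (Z.gcd_mul_mono_r p' q' g) as Hm.
    rewrite <- Hp, <- Hq', Z.abs_eq in Hm by lia. fold g in Hm. nia. }
  assert (E' : (D * (q' * q') = p' * p')%Z).
  { apply (Z.mul_reg_r _ _ (g * g)); [nia|]. rewrite Hp, Hq' in E. lia. }
  assert (Hdiv : (q' | p')%Z).
  { apply (Z.gauss _ p'); [exists (D * q')%Z; lia | now rewrite Z.gcd_comm]. }
  assert (Hunit : (q' | 1)%Z).
  { rewrite <- Hcop. apply Z.gcd_greatest; [exact Hdiv | apply Z.divide_refl]. }
  exists p'. destruct (Z.divide_1_r _ Hunit) as [-> | ->]; lia.
Qed.

Lemma squarefree_neq_square (D k : Z) : (1 < D)%Z -> squarefree D -> D <> (k * k)%Z.
Proof.
  intros HD Hsq ->. apply (Hsq (Z.abs k)); [nia|].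
  rewrite <- Z.abs_mul, Z.abs_eq by nia. apply Z.divide_refl.
Qed.

Lemma sqrt_IZR_irrational (D : Z) :
  (0 <= D)%Z -> (forall k, D <> (k * k)%Z) -> irrational (sqrt (IZR D)).
Proof.
  intros HD Hns p q Hq E.
  destruct (square_of_square_ratio D p q Hq) as [k Hk]; [|exact (Hns k Hk)].
  apply eq_IZR. rewrite !mult_IZR, <- E.
  pose proof (sqrt_sqrt (IZR D) (IZR_le 0 D HD)). nra.
Qed.

Lemma omega_irrational (D : Z) :
  (0 <= D)%Z -> (forall k, D <> (k * k)%Z) -> irrational (omega D).
Proof.
  intros HD Hns p q Hq E. pose proof (sqrt_IZR_irrational D HD Hns) as Hirr.
  unfold omega in E. destruct (D mod 4 =? 1)%Z.
  - apply (Hirr (2 * p - q)%Z q Hq). rewrite minus_IZR, mult_IZR. lra.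
  - exact (Hirr p q Hq E).
Qed.

Lemma irrational_inv_sub_IZR (x : R) (n : Z) : irrational x -> irrational (/ (x - IZR n)).
Proof.
  intros Hirr p q Hq E.
  assert (Hx : x - IZR n <> 0) by (intro H; apply (Hirr n 1%Z); [lia | lra]).
  destruct (Z.eq_dec p 0) as [-> | Hp].
  - apply Hq, eq_IZR. apply (Rmult_eq_reg_l (/ (x - IZR n))).
    + rewrite E. ring.
    + now apply Rinv_neq_0_compat.
  - apply (Hirr (q + n * p)%Z p Hp). rewrite plus_IZR, mult_IZR, <- E.
    field. exact Hx.
Qed.

Lemma one_lt_sqrt_IZR (D : Z) : (1 < D)%Z -> 1 < sqrt (IZR D).
Proof.
  intros HD. rewrite <- sqrt_1. apply sqrt_lt_1_alt. split; [lra | now apply IZR_lt].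
Qed.

Lemma sqrt_discK (D : Z) : (0 <= D)%Z -> sqrt (IZR (discK D)) = omega D - omega' D.
Proof.
  intros HD. unfold discK, omega, omega'. destruct (D mod 4 =? 1)%Z; [lra|].
  rewrite mult_IZR, sqrt_mult by (apply IZR_le; lia).
  replace (IZR 4) with (2 * 2) by (simpl; ring). rewrite sqrt_square; lra.
Qed.

Lemma one_lt_omega (D : Z) : (1 < D)%Z -> 1 < omega D.
Proof.
  intros HD. pose proof (one_lt_sqrt_IZR D HD).
  unfold omega. destruct (D mod 4 =? 1)%Z; lra.
Qed.

Lemma omega'_neg (D : Z) : (1 < D)%Z -> omega' D < 0.
Proof.
  intros HD. pose proof (one_lt_sqrt_IZR D HD).
  unfold omega'. destruct (D mod 4 =? 1)%Z; lra.
Qed.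

Definition p_prev (D : Z) (i : nat) : Z := fst (pp D i).
Definition q_prev (D : Z) (i : nat) : Z := fst (qq D i).

Definition cf_det (D : Z) (i : nat) : Z := (p_ D i * q_prev D i - q_ D i * p_prev D i)%Z.

(* [Q_i = c_1 c_2 ... c_{i+1}] *)
Definition cf_denom (D : Z) (i : nat) : R := IZR (q_ D i) * cq D (S i) + IZR (q_prev D i).

Lemma p_S (D : Z) (i : nat) : p_ D (S i) = (pq D (S i) * p_ D i + p_prev D i)%Z.
Proof. unfold p_, p_prev. simpl. now destruct (pp D i). Qed.

Lemma p_prev_S (D : Z) (i : nat) : p_prev D (S i) = p_ D i.
Proof. unfold p_, p_prev. simpl. now destruct (pp D i). Qed.

Lemma q_S (D : Z) (i : nat) : q_ D (S i) = (pq D (S i) * q_ D i + q_prev D i)%Z.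
Proof. unfold q_, q_prev. simpl. now destruct (qq D i). Qed.

Lemma q_prev_S (D : Z) (i : nat) : q_prev D (S i) = q_ D i.
Proof. unfold q_, q_prev. simpl. now destruct (qq D i). Qed.

Lemma cf_det_0 (D : Z) : cf_det D 0 = (-1)%Z.
Proof. unfold cf_det, p_, q_, p_prev, q_prev. simpl. ring. Qed.

Lemma cf_det_S (D : Z) (i : nat) : cf_det D (S i) = (- cf_det D i)%Z.
Proof. unfold cf_det. rewrite p_S, p_prev_S, q_S, q_prev_S. ring. Qed.

Lemma cf_det_unit (D : Z) (i : nat) : cf_det D i = 1%Z \/ cf_det D i = (-1)%Z.
Proof. induction i; [right; apply cf_det_0 | rewrite cf_det_S; lia]. Qed.

Lemma norm_identity_upper (sD c q q' Q N e : R) :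
  0 < c -> 0 < Q -> q * c + q' = Q -> N * Q ^ 2 = q * sD * Q + e ->
  e * c < sD * Q * q' -> N < sD / c.
Proof.
  intros Hc HQ HQdef HN Hcond.
  apply Rlt_0_minus.
  replace (sD / c - N) with ((sD * Q * q' - e * c) / (c * Q ^ 2)).
  - apply Rdiv_lt_0_compat; [lra | apply Rmult_lt_0_compat; [lra | now apply pow_lt]].
  - replace N with ((q * sD * Q + e) / Q ^ 2) by (rewrite <- HN; field; lra).
    replace q' with (Q - q * c) by lra. field. lra.
Qed.

Lemma norm_identity_lower (sD c c' q q' q'' Q Qp N e : R) :
  0 < c -> 0 < c' -> 0 < Qp -> Q = c * Qp -> q * c + q' = Q -> q' * c' + q'' = Qp ->
  N * Q ^ 2 = q * sD * Q + e -> 0 < sD * Q * q'' + e * c' * c ->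
  sD / c * (1 - 1 / (c' * c)) < N.
Proof.
  intros Hc Hc' HQp HQ HQdef HQpdef HN Hcond.
  assert (HQpos : 0 < Q) by (subst Q; nra).
  apply Rlt_0_minus.
  replace (N - sD / c * (1 - 1 / (c' * c))) with
    ((sD * Q * q'' + e * c' * c) / (c' * c * Q ^ 2)).
  - apply Rdiv_lt_0_compat; [lra | apply Rmult_lt_0_compat; [nra | now apply pow_lt]].
  - replace N with ((q * sD * Q + e) / Q ^ 2) by (rewrite <- HN; field; lra).
    replace q'' with (Qp - q' * c') by lra.
    replace q' with (Q - q * c) by lra. subst Q. field. lra.
Qed.

Lemma div_lt_inv_of_lt_div (sD c u N : R) :
  0 < sD -> 0 < u < c -> N < sD / c -> N / sD < 1 / u.
Proof.
  intros Hs Hu HN.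
  apply Rlt_0_minus. apply Rlt_0_minus in HN.
  replace (1 / u - N / sD) with ((sD / c - N) / sD + (c - u) / (u * c)) by (field; lra).
  apply Rplus_lt_0_compat; apply Rdiv_lt_0_compat; nra.
Qed.

Lemma inv_add10_lt_div (sD c c' u N : R) :
  0 < sD -> 1 < c' -> 2 <= u -> u < c < u + 1 ->
  sD / c * (1 - 1 / (c' * c)) < N -> 1 / (u + 10) < N / sD.
Proof.
  intros Hs Hc' Hu Hc HN.
  (* [(u + 10) (c' c - 1) > (c + 9) (c' c - 1) > c' c^2] as soon as [c > 9/8]. *)
  assert (Hkey : c' * c ^ 2 < (u + 10) * (c' * c - 1)).
  { assert (0 < (u + 10 - (c + 9)) * (c' * c - 1)) by (apply Rmult_lt_0_compat; nra).
    assert (0 < (c' - 1) * c) by (apply Rmult_lt_0_compat; lra).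
    nra. }
  apply Rlt_0_minus. apply Rlt_0_minus in HN.
  replace (N / sD - 1 / (u + 10)) with
    ((N - sD / c * (1 - 1 / (c' * c))) / sD
     + ((u + 10) * (c' * c - 1) - c' * c ^ 2) / ((u + 10) * (c' * c ^ 2)))
    by (field; repeat split; lra).
  apply Rplus_lt_0_compat; apply Rdiv_lt_0_compat; try lra.
  repeat apply Rmult_lt_0_compat; try apply pow_lt; lra.
Qed.

Section ContinuedFraction.

Variable D : Z.
Hypothesis hD : (1 < D)%Z.
Hypothesis omega_irr : irrational (omega D).

Local Notation sD := (sqrt (IZR (discK D))).

Lemma cq_irrational (i : nat) : irrational (cq D i).
Proof. induction i; [exact omega_irr | now apply irrational_inv_sub_IZR]. Qed.

Lemma pq_bounds (i : nat) : IZR (pq D i) < cq D i < IZR (pq D i) + 1.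
Proof.
  unfold pq. destruct (base_Int_part (cq D i)) as [[Hlt | Heq] Hgt]; [lra|].
  exfalso. apply (cq_irrational i (Int_part (cq D i)) 1%Z); [lia | rewrite Heq; lra].
Qed.

Lemma frac_cq_mul_cq_S (i : nat) : (cq D i - IZR (pq D i)) * cq D (S i) = 1.
Proof.
  pose proof (pq_bounds i). change (cq D (S i)) with (/ (cq D i - IZR (pq D i))).
  field. lra.
Qed.

Lemma one_lt_cq_S (i : nat) : 1 < cq D (S i).
Proof.
  pose proof (pq_bounds i). change (cq D (S i)) with (/ (cq D i - IZR (pq D i))).
  rewrite <- Rinv_1. apply Rinv_lt_contravar; lra.
Qed.

Lemma one_lt_cq (i : nat) : 1 < cq D i.
Proof. destruct i; [exact (one_lt_omega D hD) | apply one_lt_cq_S]. Qed.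

Lemma one_le_pq_S (i : nat) : (1 <= pq D (S i))%Z.
Proof.
  pose proof (pq_bounds (S i)). pose proof (one_lt_cq_S i).
  assert (Hpos : 0 < IZR (pq D (S i))) by lra. apply lt_IZR in Hpos. lia.
Qed.

Lemma q_bounds (i : nat) : (0 <= q_prev D i)%Z /\ (1 <= q_ D i)%Z.
Proof.
  induction i as [|i IH]; [unfold q_, q_prev; simpl; lia|].
  rewrite q_prev_S, q_S. pose proof (one_le_pq_S i). nia.
Qed.

Lemma cf_denom_0 : cf_denom D 0 = cq D 1.
Proof. unfold cf_denom, q_, q_prev. cbn [qq fst snd]. ring. Qed.

Lemma cf_denom_S (i : nat) : cf_denom D (S i) = cq D (S (S i)) * cf_denom D i.
Proof.
  unfold cf_denom. rewrite q_S, q_prev_S, plus_IZR, mult_IZR.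
  pose proof (frac_cq_mul_cq_S (S i)) as Hrec.
  apply Rminus_diag_uniq.
  transitivity (IZR (q_ D i) * (1 - (cq D (S i) - IZR (pq D (S i))) * cq D (S (S i))));
    [ring | rewrite Hrec; ring].
Qed.

Lemma cq_S_le_cf_denom (i : nat) : cq D (S i) <= cf_denom D i.
Proof.
  destruct (q_bounds i) as [Hq' Hq]. apply IZR_le in Hq, Hq'.
  pose proof (one_lt_cq_S i). unfold cf_denom. nra.
Qed.

Lemma cq_lt_cf_denom_S (i : nat) : cq D (S (S i)) < cf_denom D (S i).
Proof.
  rewrite cf_denom_S. pose proof (one_lt_cq_S (S i)).
  pose proof (one_lt_cq_S i). pose proof (cq_S_le_cf_denom i). nra.
Qed.

Lemma omega_mul_cf_denom (i : nat) :
  omega D * cf_denom D i = IZR (p_ D i) * cq D (S i) + IZR (p_prev D i).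
Proof.
  induction i as [|i IH].
  - rewrite cf_denom_0. pose proof (frac_cq_mul_cq_S 0) as Hrec.
    change (cq D 0) with (omega D) in Hrec. unfold p_, p_prev. cbn [pp fst snd]. lra.
  - rewrite cf_denom_S, p_S, p_prev_S, plus_IZR, mult_IZR.
    pose proof (frac_cq_mul_cq_S (S i)) as Hrec.
    replace (omega D * (cq D (S (S i)) * cf_denom D i))
      with (cq D (S (S i)) * (omega D * cf_denom D i)) by ring.
    rewrite IH. apply Rminus_diag_uniq.
    transitivity (IZR (p_ D i) * ((cq D (S i) - IZR (pq D (S i))) * cq D (S (S i)) - 1));
      [ring | rewrite Hrec; ring].
Qed.

Lemma alpha_conj_mul_cf_denom (i : nat) : alpha_conj D i * cf_denom D i = IZR (cf_det D i).
Proof.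
  unfold alpha_conj.
  replace ((IZR (p_ D i) - IZR (q_ D i) * omega D) * cf_denom D i)
    with (IZR (p_ D i) * cf_denom D i - IZR (q_ D i) * (omega D * cf_denom D i)) by ring.
  rewrite omega_mul_cf_denom. unfold cf_denom, cf_det.
  rewrite minus_IZR, !mult_IZR. ring.
Qed.

Lemma omega_bounds : 1 < omega D < sD.
Proof.
  rewrite sqrt_discK by lia. pose proof (one_lt_omega D hD). pose proof (omega'_neg D hD). lra.
Qed.

Lemma Nrm_mul_cf_denom_sq (i : nat) :
  Nrm D i * cf_denom D i ^ 2 = IZR (q_ D i) * sD * cf_denom D i + IZR (cf_det D i).
Proof.
  assert (Halpha : alpha D i * cf_denom D i
                   = IZR (cf_det D i) + IZR (q_ D i) * sD * cf_denom D i).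
  { rewrite sqrt_discK by lia. rewrite <- alpha_conj_mul_cf_denom.
    unfold alpha, alpha_conj. ring. }
  assert (Hpos : 1 < IZR (q_ D i) * sD * cf_denom D i).
  { destruct (q_bounds i) as [_ Hq]. apply IZR_le in Hq.
    pose proof (cq_S_le_cf_denom i). pose proof (one_lt_cq_S i). pose proof omega_bounds.
    assert (1 < sD * cf_denom D i) by nra.
    nra. }
  unfold Nrm. rewrite <- (Rabs_pos_eq (cf_denom D i ^ 2)) by apply pow2_ge_0.
  rewrite <- Rabs_mult.
  replace (alpha D i * alpha_conj D i * cf_denom D i ^ 2)
    with ((alpha D i * cf_denom D i) * (alpha_conj D i * cf_denom D i)) by ring.
  rewrite Halpha, alpha_conj_mul_cf_denom.
  destruct (cf_det_unit D i) as [-> | ->].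
  - rewrite Rabs_pos_eq; lra.
  - rewrite Rabs_left; lra.
Qed.

Lemma Nrm_lt_div (i : nat) : Nrm D i < sD / cq D (S i).
Proof.
  pose proof omega_bounds. pose proof (one_lt_cq_S i). pose proof (cq_S_le_cf_denom i).
  apply (norm_identity_upper _ _ (IZR (q_ D i)) (IZR (q_prev D i)) (cf_denom D i) _
           (IZR (cf_det D i))); [lra | lra | reflexivity | apply Nrm_mul_cf_denom_sq |].
  destruct i as [|k].
  - rewrite cf_det_0. change (q_prev D 0) with 0%Z. lra.
  - rewrite q_prev_S. destruct (q_bounds k) as [_ Hq]. apply IZR_le in Hq.
    assert (IZR (cf_det D (S k)) <= 1) by (destruct (cf_det_unit D (S k)) as [-> | ->]; lra).
    assert (Q_lt : cf_denom D (S k) < sD * cf_denom D (S k)) by nra.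
    set (X := sD * cf_denom D (S k)) in *. nra.
Qed.

Lemma div_lt_Nrm (i : nat) : sD / cq D (S i) * (1 - 1 / (cq D i * cq D (S i))) < Nrm D i.
Proof.
  pose proof omega_bounds. pose proof (one_lt_cq_S i).
  pose proof (Nrm_mul_cf_denom_sq i) as HN.
  destruct i as [|k].
  - rewrite cf_denom_0, cf_det_0 in HN. change (cq D 0) with (omega D).
    (* [q_{-2} = 1] and [Q_{-1} = 1] extend the recurrences to [i = 0]. *)
    apply (norm_identity_lower _ _ _ 1 0 1 (cq D 1) 1 _ (IZR (-1)));
      [lra | lra | lra | ring | ring | ring | | nra].
    rewrite HN. change (q_ D 0) with 1%Z. ring.
  - pose proof (one_lt_cq_S k). pose proof (cq_S_le_cf_denom k).
    apply (norm_identity_lower _ _ _ (IZR (q_ D (S k))) (IZR (q_ D k)) (IZR (q_prev D k))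
             (cf_denom D (S k)) (cf_denom D k) _ (IZR (cf_det D (S k))));
      [lra | lra | lra | apply cf_denom_S | unfold cf_denom; now rewrite q_prev_S | reflexivity
      | exact HN |].
    rewrite cf_denom_S. destruct k as [|m].
    + rewrite cf_det_S, cf_det_0. change (- -1)%Z with 1%Z. change (q_prev D 0) with 0%Z.
      nra.
    + rewrite q_prev_S. destruct (q_bounds m) as [_ Hq]. apply IZR_le in Hq.
      pose proof (cq_lt_cf_denom_S m) as Hc'.
      set (c := cq D (S (S (S m)))) in *. set (c' := cq D (S (S m))) in *.
      assert (Hc'c : c' * c < c * cf_denom D (S m)) by nra.
      set (Q := c * cf_denom D (S m)) in *.
      assert (Hcc : 0 < c' * c) by nra.
      assert (HQ : Q < sD * Q) by nra.
      set (X := sD * Q) in *.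
      destruct (cf_det_unit D (S (S m))) as [-> | ->]; nra.
Qed.

End ContinuedFraction.

Theorem lemma5 (D : Z) (hD : (1 < D)%Z) (hsq : squarefree D) (i : nat) :
  let sD := sqrt (IZR (discK D)) in
  sD / cq D (S i) * (1 - 1 / (cq D i * cq D (S i))) < Nrm D i
  /\ Nrm D i < sD / cq D (S i)
  /\ Nrm D i / sD < 1 / IZR (pq D (S i))
  /\ ((3 <= pq D (S i))%Z -> 1 / (IZR (pq D (S i)) + 10) < Nrm D i / sD).
Proof.
  intros sD; subst sD.
  assert (Hirr : irrational (omega D))
    by (apply omega_irrational; [lia | intro k; exact (squarefree_neq_square D k hD hsq)]).
  pose proof (omega_bounds D hD) as Hs.
  pose proof (pq_bounds D Hirr (S i)) as Hc.
  pose proof (one_le_pq_S D Hirr i) as Hu. apply IZR_le in Hu.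
  pose proof (div_lt_Nrm D hD Hirr i) as Hlower.
  pose proof (Nrm_lt_div D hD Hirr i) as Hupper.
  split; [exact Hlower | split; [exact Hupper | split]].
  - apply (div_lt_inv_of_lt_div _ (cq D (S i))); [lra | lra | exact Hupper].
  - intros H3. apply IZR_le in H3.
    apply (inv_add10_lt_div _ (cq D (S i)) (cq D i));
      [lra | exact (one_lt_cq D hD Hirr i) | lra | lra | exact Hlower].
Qed.
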